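(* Let $(X_1,\dots,X_d)$ be a non-degenerate $d$-dimensional $1$-Meixner random vector with $E[X_k]=0$ and $E[X_iX_j]=\delta_{i,j}$ for all $i,j,k$, and let $\alpha_{i,j,k}$ be the real numbers with $[U_i,X_j]=\sum_{k}\alpha_{i,j,k}X_k+\beta_{i,j}I$. Then for all $(i,j,k)\in\{1,\dots,d\}^3$: (1) $\alpha_{i,j,k}=\alpha_{j,i,k}$; (2) $\alpha_{i,j,k}=\alpha_{i,k,j}$; (3) for every permutation $\pi$ of $(i,j,k)$, $\alpha_{\pi(i),\pi(j),\pi(k)}=\alpha_{i,j,k}$.
   Context: Let $X_1,\dots,X_d$ be real random variables on $(\Omega,\mathcal F,P)$ with finite moments of all orders. $F$ is the space of polynomial random variables $f(X_1,\dots,X_d)$ (complex coefficients), $F_n$ those of degree $\le n$, $G_0=F_0$, $G_n=F_n\ominus F_{n-1}$ in $L^2(P)$. For $f\in G_n$, $X_if\in G_{n-1}\oplus G_n\oplus G_{n+1}$; its components define $a^-(i)f,a^0(i)f,a^+(i)f$ respectively, extended linearly to $F$. $U_i:=a^-(i)+\tfrac12a^0(i)$ (semi-annihilation operator). $(X_1,\dots,X_d)$ is a $d$-dimensional $1$-Meixner random vector if there are reals $\alpha_{i,j,k},\beta_{i,j}$ with $[U_i,X_j]=\sum_k\alpha_{i,j,k}X_k+\beta_{i,j}I$ on $F$ for all $i,j$ (with $X_j$ the multiplication operator, $I$ the identity); it is non-degenerate if $I,X_1,\dots,X_d$ are linearly independent operators on $F$. *)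

From mathcomp Require Import all_boot all_order all_algebra all_fingroup.
From mathcomp Require Import all_classical all_reals all_analysis.
From mathcomp Require Import complex.
Set Implicit Arguments. Unset Strict Implicit. Unset Printing Implicit Defensive.
Import Order.TTheory GRing.Theory Num.Theory.
Local Open Scope ring_scope.
Local Open Scope complex_scope.

Section Meixner.
Variables (R : realType) (dm : measure_display) (T : measurableType dm)
  (P : probability T R) (d : nat) (X : 'I_d -> T -> R).

Definition cre (z : R[i]) : R := let: a +i* _ := z in a.
Definition cim (z : R[i]) : R := let: _ +i* b := z in b.

Definition cexpect (f : T -> R[i]) : R[i] :=
  (fine (expectation P (fun w => cre (f w)))) +i*
  (fine (expectation P (fun w => cim (f w)))).

Definition l2inner (f g : T -> R[i]) : R[i] := cexpect (fun w => f w * conjc (g w)).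

Definition eqL2 (f g : T -> R[i]) : Prop :=
  l2inner (fun w => f w - g w) (fun w => f w - g w) = 0.

Definition mdeg (m : {ffun 'I_d -> nat}) : nat := (\sum_(i < d) m i)%N.
Definition monoRV (m : {ffun 'I_d -> nat}) : T -> R[i] :=
  fun w => \prod_(i < d) ((X i w) ^+ (m i))%:C.

Definition polyRV_lt (n : nat) (f : T -> R[i]) : Prop :=
  exists s : seq ({ffun 'I_d -> nat} * R[i]),
    all (fun mc => mdeg mc.1 < n)%N s /\
    f = (fun w => \sum_(mc <- s) mc.2 * monoRV mc.1 w).

Definition inFn (n : nat) (f : T -> R[i]) : Prop := polyRV_lt n.+1 f.
Definition inF (f : T -> R[i]) : Prop := exists n, inFn n f.

(* G_n = F_n (-) F_{n-1}  (G_0 = F_0) *)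
Definition inG (n : nat) (f : T -> R[i]) : Prop :=
  inFn n f /\ forall g, polyRV_lt n g -> l2inner f g = 0.

Definition is_Gcomp (n : nat) (g h : T -> R[i]) : Prop :=
  inG n h /\ forall k, inG n k -> l2inner (fun w => g w - h w) k = 0.

Definition Gcomp (n : nat) (g : T -> R[i]) : T -> R[i] :=
  match pselect (exists h, is_Gcomp n g h) with
  | left e => proj1_sig (cid e)
  | right _ => fun _ => 0
  end.

Definition mulX (i : 'I_d) (f : T -> R[i]) : T -> R[i] :=
  fun w => (X i w)%:C * f w.

Definition aminus_n (i : 'I_d) (n : nat) (f : T -> R[i]) : T -> R[i] :=
  if n is n'.+1 then Gcomp n' (mulX i f) else (fun _ => 0).
Definition azero_n (i : 'I_d) (n : nat) (f : T -> R[i]) : T -> R[i] :=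
  Gcomp n (mulX i f).

(* U_i = a^-(i) + 1/2 a^0(i), extended linearly:
   for g in F_N, U_i g = sum_{n <= N} (a^-(i) + 1/2 a^0(i)) (G_n-component of g) *)
Definition Uop (i : 'I_d) (N : nat) (g : T -> R[i]) : T -> R[i] :=
  fun w => \sum_(n < N.+1)
    (aminus_n i n (Gcomp n g) w + (2%:R)^-1 * azero_n i n (Gcomp n g) w).

Definition meixner_comm (alpha : 'I_d -> 'I_d -> 'I_d -> R)
  (beta : 'I_d -> 'I_d -> R) : Prop :=
  forall (i j : 'I_d) (N : nat) (g : T -> R[i]), inFn N g ->
    eqL2 (fun w => Uop i N.+1 (mulX j g) w - (X j w)%:C * Uop i N g w)
         (fun w => \sum_(k < d) (alpha i j k)%:C * (X k w)%:C * g w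
                   + (beta i j)%:C * g w).

Definition meixner_nondegenerate : Prop :=
  forall (c0 : R[i]) (c : 'I_d -> R[i]),
    (forall g, inF g ->
       eqL2 (fun w => c0 * g w + \sum_(k < d) c k * (X k w)%:C * g w)
            (fun _ => 0)) ->
    c0 = 0 /\ forall k, c k = 0.

End Meixner.

Definition trip (d : nat) (i j k : 'I_d) : 'I_3 -> 'I_d :=
  fun p => tnth [tuple i; j; k] p.

From mathcomp Require Import all_boot all_order all_algebra all_fingroup.
From mathcomp Require Import all_classical all_reals all_analysis.
From mathcomp Require Import complex measurable_realfun.
From mathcomp Require Import ring lra.
Import Order.TTheory GRing.Theory Num.Theory.
Local Open Scope ring_scope.
Local Open Scope complex_scope.

(* Under E[X_k] = 0 and E[X_i X_j] = δ_ij the variables 1, X_1, ..., X_d are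
   orthonormal, so G_0 consists of the constants and G_1 of the linear combinations
   of the X_k.  Hence U_i 1 = 0 and U_i X_j = δ_ij + 1/2 Σ_k E[X_i X_j X_k] X_k, and
   the commutation relation applied to 1 says that
   δ_ij - β_ij + Σ_k (1/2 E[X_i X_j X_k] - α_ijk) X_k vanishes in L^2(P).  Its squared
   norm is the sum of the squares of its coefficients, so α_ijk = 1/2 E[X_i X_j X_k],
   which is symmetric in (i, j, k). *)

Section finite_expectation.
Context {R : realType} {dm : measure_display} {T : measurableType dm}.
Variable P : probability T R.
Local Notation L1 := (Lfun P 1).

Definition Efin (x : T -> R) : R := fine 'E_P[x].

Lemma Efin_ext x y : x =1 y -> Efin x = Efin y.
Proof. by move=> /funext ->. Qed.

Lemma Efin_cst k : Efin (fun=> k) = k.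
Proof. by rewrite /Efin (_ : (fun=> k) = cst k)// expectation_cst. Qed.

Lemma EfinD x y : x \in L1 -> y \in L1 -> Efin (fun w => x w + y w) = Efin x + Efin y.
Proof. by move=> hx hy; rewrite /Efin expectationD// fineD// expectation_fin_num. Qed.

Lemma EfinZ k x : x \in L1 -> Efin (fun w => k * x w) = k * Efin x.
Proof.
move=> hx; have -> : (fun w => k * x w) = k \o* x by apply/funext => w; rewrite mulrC.
by rewrite /Efin expectationZl// fineM// expectation_fin_num.
Qed.

Lemma L1_sum (I : Type) (s : seq I) (F : I -> T -> R) :
  (forall i, F i \in L1) -> (fun w => \sum_(i <- s) F i w) \in L1.
Proof. by move=> hF; rewrite -fct_sumE rpred_sum. Qed.

Lemma Efin_sum (I : Type) (s : seq I) (F : I -> T -> R) :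
  (forall i, F i \in L1) -> Efin (fun w => \sum_(i <- s) F i w) = \sum_(i <- s) Efin (F i).
Proof.
move=> hF; elim: s => [|a s IH].
  by under Efin_ext do rewrite big_nil; rewrite Efin_cst big_nil.
under Efin_ext do rewrite big_cons.
by rewrite EfinD ?L1_sum// IH big_cons.
Qed.

Lemma L1_dominated (f g : T -> R) : measurable_fun setT f -> g \in L1 ->
  (forall w, `|f w| <= g w) -> f \in L1.
Proof.
move=> mf /Lfun1_integrable g1 fg; apply/Lfun1_integrable.
apply: (le_integrable measurableT _ _ g1); first exact/measurable_EFinP.
by move=> w _ /=; rewrite lee_fin (le_trans (fg w)) ?ler_norm.
Qed.

Lemma creD (a b : R[i]) : cre (a + b) = cre a + cre b. Proof. by case: a; case: b. Qed.
Lemma cimD (a b : R[i]) : cim (a + b) = cim a + cim b. Proof. by case: a; case: b. Qed.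
Lemma cre_realCM r (c : R[i]) : cre (r%:C * c) = r * cre c.
Proof. by case: c => a b /=; ring. Qed.
Lemma cim_realCM r (c : R[i]) : cim (r%:C * c) = r * cim c.
Proof. by case: c => a b /=; ring. Qed.

Lemma conjcM_real (c : R[i]) (x : R) : conjc (c * x%:C) = conjc c * x%:C.
Proof. by case: c => a b; apply/eqP; rewrite eq_complex /=; apply/andP; split; apply/eqP; ring. Qed.

Definition cintegrable (f : T -> R[i]) : Prop :=
  (fun w => cre (f w)) \in L1 /\ (fun w => cim (f w)) \in L1.

Lemma cexpectE f :
  cexpect P f = Efin (fun w => cre (f w)) +i* Efin (fun w => cim (f w)).
Proof. by []. Qed.

Lemma cexpect_ext f g : f =1 g -> cexpect P f = cexpect P g.
Proof. by move=> /funext ->. Qed.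

Lemma cexpect0 : cexpect P (fun=> 0) = 0.
Proof. by rewrite cexpectE /= Efin_cst. Qed.

Lemma cintegrableD f g : cintegrable f -> cintegrable g -> cintegrable (fun w => f w + g w).
Proof.
move=> [f1 f2] [g1 g2]; split.
  by under eq_fun do rewrite creD; exact: rpredD.
by under eq_fun do rewrite cimD; exact: rpredD.
Qed.

Lemma cexpectD f g : cintegrable f -> cintegrable g ->
  cexpect P (fun w => f w + g w) = cexpect P f + cexpect P g.
Proof.
move=> [f1 f2] [g1 g2]; rewrite !cexpectE.
under Efin_ext do rewrite creD; under [X in _ +i* X]Efin_ext do rewrite cimD.
by rewrite !EfinD.
Qed.

Lemma cintegrable_sum (I : Type) (s : seq I) (F : I -> T -> R[i]) :
  (forall i, cintegrable (F i)) -> cintegrable (fun w => \sum_(i <- s) F i w).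
Proof.
move=> hF; elim: s => [|a s IH].
  by split; under eq_fun do rewrite big_nil; exact: (Lfun_cst P 0 1).
by under eq_fun do rewrite big_cons; exact: cintegrableD.
Qed.

Lemma cexpect_sum (I : Type) (s : seq I) (F : I -> T -> R[i]) :
  (forall i, cintegrable (F i)) ->
  cexpect P (fun w => \sum_(i <- s) F i w) = \sum_(i <- s) cexpect P (F i).
Proof.
move=> hF; elim: s => [|a s IH].
  by under cexpect_ext do rewrite big_nil; rewrite cexpect0 big_nil.
under cexpect_ext do rewrite big_cons.
by rewrite big_cons -IH -cexpectD//; exact: cintegrable_sum.
Qed.

Lemma cintegrable_realCM x c : x \in L1 -> cintegrable (fun w => (x w)%:C * c).
Proof.
move=> hx; split.
  by under eq_fun do rewrite cre_realCM mulrC; exact: rpredZ.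
by under eq_fun do rewrite cim_realCM mulrC; exact: rpredZ.
Qed.

Lemma cexpect_realCM x c : x \in L1 -> cexpect P (fun w => (x w)%:C * c) = (Efin x)%:C * c.
Proof.
move=> hx; rewrite cexpectE.
under Efin_ext do rewrite cre_realCM mulrC.
under [X in _ +i* X]Efin_ext do rewrite cim_realCM mulrC.
rewrite !EfinZ//; case: c => a b /=.
apply/eqP; rewrite eq_complex /=; apply/andP; split; apply/eqP; ring.
Qed.

Lemma cexpect_lin (I : Type) (s : seq I) (x : I -> T -> R) (c : I -> R[i]) :
  (forall i, x i \in L1) ->
  cexpect P (fun w => \sum_(i <- s) (x i w)%:C * c i) = \sum_(i <- s) (Efin (x i))%:C * c i.
Proof.
move=> hx; rewrite cexpect_sum => [|i]; last exact: cintegrable_realCM.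
by apply: eq_bigr => i _; rewrite cexpect_realCM.
Qed.

Lemma l2inner_realC x y : (fun w => x w * y w) \in L1 ->
  l2inner P (fun w => (x w)%:C) (fun w => (y w)%:C) = (Efin (fun w => x w * y w))%:C.
Proof.
move=> hxy; rewrite /l2inner -[RHS]mulr1 -cexpect_realCM//.
by apply: cexpect_ext => w; rewrite conjc_real -rmorphM mulr1.
Qed.

End finite_expectation.

Section low_degree.
Context {R : realType} {dm : measure_display} {T : measurableType dm}.
Context (P : probability T R) {d : nat} (X : 'I_d -> T -> R).
Local Notation L1 := (Lfun P 1).

Lemma monoRV_deg0 m : mdeg m = 0%N -> monoRV X m = fun=> 1.
Proof.
move=> /eqP; rewrite /mdeg sum_nat_eq0 => /forallP m0; apply/funext => w.
by rewrite /monoRV big1 // => i _; rewrite (eqP (m0 i)) expr0.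
Qed.

Lemma monoRV_deg1 m : mdeg m = 1%N -> exists l, monoRV X m = fun w => (X l w)%:C.
Proof.
move=> m1; have [l ml | m0] := pickP (fun l => m l != 0%N); last first.
  by move: m1; rewrite /mdeg big1 // => i _; apply/eqP/negbFE/m0.
exists l; apply/funext => w; move: m1; rewrite /mdeg (bigD1 l) //= => m1.
have ml1 : m l = 1%N.
  by move: ml m1; case: (m l) => [|[|k]] //= _; rewrite addSn.
move: m1; rewrite ml1 add1n => -[] /eqP; rewrite sum_nat_eq0 => /forallP mi.
rewrite /monoRV (bigD1 l) //= big1 => [|i il]; first by rewrite ml1 expr1 mulr1.
by move: (mi i); rewrite il /= => /eqP ->; rewrite expr0.
Qed.

Lemma polyRV_lt0 g : polyRV_lt X 0 g -> g = fun=> 0.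
Proof. by case=> [[|a s] [hs ->]] //; apply/funext => w; rewrite big_nil. Qed.

Lemma polyRV_lt1 g : polyRV_lt X 1 g -> exists c, g = fun=> c.
Proof.
case=> s [hs ->]; exists (\sum_(mc <- s) mc.2); apply/funext => w.
rewrite big_seq [RHS]big_seq; apply: eq_bigr => mc smc.
move/allP: hs => /(_ mc smc); rewrite ltnS leqn0 => /eqP m0.
by rewrite monoRV_deg0 // mulr1.
Qed.

Lemma polyRV_lt2 g : polyRV_lt X 2 g ->
  exists c0 (c : 'I_d -> R[i]), g = fun w => c0 + \sum_(l < d) c l * (X l w)%:C.
Proof.
case=> s [hs ->]; elim: s hs => [|[m a] s IH] /=.
  by exists 0, (fun=> 0); apply/funext => w; rewrite big_nil big1 ?addr0 // => l _; rewrite mul0r.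
move=> /andP[ma /IH [c0 [c /funeqP e]]].
case hm: (mdeg m) ma => [|[|k]] // _.
  exists (a + c0), c; apply/funext => w.
  by rewrite big_cons e /= monoRV_deg0 // mulr1 addrA.
move/monoRV_deg1: hm => [l ml].
exists c0, (fun l' => c l' + (l' == l)%:R * a); apply/funext => w; rewrite big_cons e /= ml.
have delta_sum : \sum_(i < d) (i == l)%:R * a * (X i w)%:C = a * (X l w)%:C.
  by rewrite (bigD1 l) //= eqxx mul1r big1 ?addr0 // => i /negPf ->; rewrite !mul0r.
under [in RHS]eq_bigr do rewrite mulrDl.
by rewrite big_split /= delta_sum; ring.
Qed.

Lemma polyRV_lt_cst n c : polyRV_lt X n.+1 (fun=> c).
Proof.
pose m0 : {ffun 'I_d -> nat} := [ffun=> 0%N].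
have deg0 : mdeg m0 = 0%N by rewrite /mdeg big1 // => i _; rewrite ffunE.
exists [:: (m0, c)]; split; first by rewrite /= deg0.
by apply/funext => w; rewrite big_seq1 monoRV_deg0 // mulr1.
Qed.

Lemma polyRV_lt_lin (e : 'I_d -> R) :
  polyRV_lt X 2 (fun w => (\sum_(l < d) e l * X l w)%:C).
Proof.
pose delta l : {ffun 'I_d -> nat} := [ffun i => nat_of_bool (i == l)].
have delta_eq l i : i != l -> delta l i = 0%N by rewrite ffunE => /negPf ->.
have deg1 l : mdeg (delta l) = 1%N.
  by rewrite /mdeg (bigD1 l) //= big1 => [|i /delta_eq//]; rewrite ffunE eqxx.
exists [seq (delta l, (e l)%:C) | l <- enum 'I_d]; split.
  by apply/allP => mc /mapP [l _ ->] /=; rewrite deg1.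
apply/funext => w; rewrite big_map big_enum /= rmorph_sum; apply: eq_bigr => l _ /=.
rewrite rmorphM /monoRV (bigD1 l) //= big1 => [|i /delta_eq ->]; last by rewrite expr0.
by rewrite ffunE eqxx expr1 mulr1.
Qed.

Lemma Gcomp_unique n g h : is_Gcomp P X n g h ->
  (forall h', is_Gcomp P X n g h' -> h' = h) -> Gcomp P X n g = h.
Proof.
move=> gh uniq_h; rewrite /Gcomp; case: pselect => [e|]; last by case; exists h.
exact/uniq_h/(proj2_sig (cid e)).
Qed.

Lemma inG0_cst c : inG P X 0 (fun=> c).
Proof.
split; first exact: polyRV_lt_cst.
move=> g /polyRV_lt0 ->; rewrite /l2inner.
by under cexpect_ext do rewrite conjc0 mulr0; rewrite cexpect0.
Qed.

Lemma Gcomp0 r : r \in L1 -> Gcomp P X 0 (fun w => (r w)%:C) = fun=> (Efin P r)%:C.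
Proof.
move=> hr; apply: Gcomp_unique.
  split=> [|_ [/polyRV_lt1 [c ->] _]]; first exact: inG0_cst.
  rewrite /l2inner; under cexpect_ext do rewrite -rmorphB.
  rewrite cexpect_realCM; last exact: rpredB hr (Lfun_cst P _ 1).
  by rewrite EfinD ?Lfun_cst// Efin_cst subrr mul0r.
move=> _ [[/polyRV_lt1 [c ->] _] orth].
have := orth _ (inG0_cst 1); rewrite /l2inner.
pose one : T -> R := fun=> 1.
have one1 : one \in L1 := Lfun_cst P 1 1.
under cexpect_ext do rewrite conjc1 mulr1.
have -> : (fun w => (r w)%:C - c) = (fun w => (r w)%:C * 1 + (one w)%:C * - c).
  by apply/funext => w; rewrite rmorph1 mulr1 mul1r.
rewrite cexpectD; [|exact: cintegrable_realCM..].
rewrite !cexpect_realCM// Efin_cst rmorph1 mulr1 mul1r.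
by move=> /eqP; rewrite subr_eq0 => /eqP ->.
Qed.

Lemma Gcomp0_cst (c : R) : Gcomp P X 0 (fun=> c%:C) = fun=> c%:C.
Proof. by rewrite (Gcomp0 _ (Lfun_cst P c 1)) Efin_cst. Qed.

Lemma mulX_realC i r : mulX X i (fun w => (r w)%:C) = fun w => (X i w * r w)%:C.
Proof. by apply/funext => w; rewrite /mulX rmorphM. Qed.

End low_degree.

Section orthonormal.
Context {R : realType} {dm : measure_display} {T : measurableType dm}.
Context (P : probability T R) {d : nat} (X : 'I_d -> T -> R).
Local Notation L1 := (Lfun P 1).
Hypothesis X_L1 : forall k, X k \in L1.
Hypothesis XX_L1 : forall k l, (fun w => X k w * X l w) \in L1.
Hypothesis EX : forall k, Efin P (X k) = 0.
Hypothesis EXX : forall k l, Efin P (fun w => X k w * X l w) = (k == l)%:R.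

Lemma L1_lin (b : 'I_d -> R) : (fun w => \sum_(l < d) b l * X l w) \in L1.
Proof. by apply: L1_sum => l; exact: rpredZ. Qed.

Lemma Efin_lin (b : 'I_d -> R) : Efin P (fun w => \sum_(l < d) b l * X l w) = 0.
Proof.
rewrite Efin_sum => [|l]; last exact: rpredZ.
by rewrite big1 // => l _; rewrite EfinZ // EX mulr0.
Qed.

Lemma Efin_lin_mulX (b : 'I_d -> R) m :
  Efin P (fun w => \sum_(l < d) b l * (X l w * X m w)) = b m.
Proof.
rewrite Efin_sum => [|l]; last exact: rpredZ.
rewrite (bigD1 m) //= EfinZ // EXX eqxx mulr1 big1 ?addr0 // => l /negPf lm.
by rewrite EfinZ // EXX lm mulr0.
Qed.

Lemma Efin_affine_sqr c (b : 'I_d -> R) :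
  let s w := c + \sum_(l < d) b l * X l w in
  (fun w => s w * s w) \in L1 /\ Efin P (fun w => s w * s w) = c ^+ 2 + \sum_(l < d) b l ^+ 2.
Proof.
move=> s.
have sE : s \in L1 by apply: rpredD; [exact: Lfun_cst | exact: L1_lin].
have bXX_L1 m : (fun w => \sum_(l < d) b l * (X l w * X m w)) \in L1.
  by apply: L1_sum => l; exact: rpredZ.
have sX_E m : (fun w => s w * X m w) =
    (fun w => c * X m w + \sum_(l < d) b l * (X l w * X m w)).
  apply/funext => w; rewrite /s mulrDl big_distrl /=; congr (_ + _).
  by apply: eq_bigr => l _; rewrite mulrA.
have sX_L1 m : (fun w => s w * X m w) \in L1.
  by rewrite sX_E; apply: rpredD; [exact: rpredZ | exact: bXX_L1].
have ss_E : (fun w => s w * s w) =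
    (fun w => c * s w + \sum_(m < d) b m * (s w * X m w)).
  apply/funext => w; rewrite {1}/s mulrDl big_distrl /=; congr (_ + _).
  by apply: eq_bigr => m _; rewrite mulrCA mulrC.
have ss_L1 : (fun w => s w * s w) \in L1.
  by rewrite ss_E; apply: rpredD; [exact: rpredZ | apply: L1_sum => m; exact: rpredZ].
split=> //; rewrite ss_E EfinD; [|exact: rpredZ|by apply: L1_sum => m; exact: rpredZ].
rewrite EfinZ // EfinD ?Lfun_cst ?L1_lin // Efin_cst Efin_lin addr0.
rewrite Efin_sum => [|m]; last exact: rpredZ.
rewrite -expr2; congr (_ + _); apply: eq_bigr => m _.
by rewrite EfinZ // sX_E EfinD ?rpredZ // EfinZ // EX mulr0 add0r Efin_lin_mulX expr2.
Qed.

Lemma inG1_lin (e : 'I_d -> R) : inG P X 1 (fun w => (\sum_(l < d) e l * X l w)%:C).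
Proof.
split=> [|g /polyRV_lt1 [c ->]]; first exact: polyRV_lt_lin.
by rewrite /l2inner cexpect_realCM ?L1_lin // Efin_lin rmorph0 mul0r.
Qed.

Lemma inG1_X m : inG P X 1 (fun w => (X m w)%:C).
Proof.
have := inG1_lin (fun l => (l == m)%:R); congr inG; apply/funext => w; congr _%:C.
by rewrite (bigD1 m) //= eqxx mul1r big1 ?addr0 // => l /negPf ->; rewrite mul0r.
Qed.

Lemma inG1_lin_shape k : inG P X 1 k ->
  exists c : 'I_d -> R[i], k = fun w => \sum_(l < d) c l * (X l w)%:C.
Proof.
move=> [/polyRV_lt2 [c0 [c ->]] orth]; exists c.
have := orth _ (polyRV_lt_cst X 0 (1 : R)%:C); rewrite /l2inner.
pose one : T -> R := fun=> 1.
have -> : (fun w => (c0 + \sum_(l < d) c l * (X l w)%:C) * conjc (1 : R)%:C) =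
    (fun w => (one w)%:C * c0 + \sum_(l < d) (X l w)%:C * c l).
  by apply/funext => w; rewrite conjc_real mulr1 mul1r; under eq_bigr do rewrite mulrC.
have one_c0 : cintegrable P (fun w => (one w)%:C * c0) by exact/cintegrable_realCM/Lfun_cst.
have lin_c : cintegrable P (fun w => \sum_(l < d) (X l w)%:C * c l).
  by apply: cintegrable_sum => l; exact: cintegrable_realCM.
rewrite cexpectD // cexpect_realCM ?Lfun_cst // cexpect_lin // Efin_cst rmorph1 mul1r.
rewrite big1 ?addr0 => [->|l _]; last by rewrite EX rmorph0 mul0r.
by apply/funext => w; rewrite add0r.
Qed.

Lemma Gcomp1 r : (forall l, (fun w => r w * X l w) \in L1) ->
  Gcomp P X 1 (fun w => (r w)%:C) =
  fun w => (\sum_(l < d) Efin P (fun w => r w * X l w) * X l w)%:C.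
Proof.
set e := fun l => Efin P (fun w => r w * X l w); move=> rX; apply: Gcomp_unique.
  split=> [|_ /inG1_lin_shape [c ->]]; first exact: inG1_lin.
  have res_E l : (fun w => (r w - \sum_(m < d) e m * X m w) * X l w) =
      (fun w => r w * X l w + \sum_(m < d) - e m * (X m w * X l w)).
    apply/funext => w; rewrite mulrBl big_distrl /= -sumrN; congr (_ + _).
    by apply: eq_bigr => m _; rewrite mulNr mulrA.
  have res_L1 l : (fun w => (r w - \sum_(m < d) e m * X m w) * X l w) \in L1.
    by rewrite res_E; apply: rpredD => //; apply: L1_sum => m; exact: rpredZ.
  rewrite /l2inner; under cexpect_ext => w.
    rewrite -rmorphB rmorph_sum big_distrr /=.
    under eq_bigr => l _ do rewrite conjcM_real mulrCA -rmorphM mulrC.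
    over.
  rewrite cexpect_lin // big1 // => l _; rewrite res_E EfinD ?Efin_lin_mulX //.
    by rewrite subrr rmorph0 mul0r.
  by apply: L1_sum => m; exact: rpredZ.
move=> _ [/inG1_lin_shape [t ->] orth]; apply/funext => w.
suff te m : t m = (e m)%:C.
  by rewrite rmorph_sum; apply: eq_bigr => l _; rewrite te rmorphM.
have := orth _ (inG1_X m); rewrite /l2inner.
have -> : (fun w => ((r w)%:C - \sum_(l < d) t l * (X l w)%:C) * conjc (X m w)%:C) =
    (fun w => (r w * X m w)%:C * 1 + \sum_(l < d) (X l w * X m w)%:C * - t l).
  apply/funext => w'; rewrite conjc_real mulr1 mulrBl rmorphM big_distrl /= -sumrN.
  by congr (_ + _); apply: eq_bigr => l _; rewrite rmorphM; ring.
have rX_1 : cintegrable P (fun w => (r w * X m w)%:C * 1) by exact: cintegrable_realCM.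
have lin_t : cintegrable P (fun w => \sum_(l < d) (X l w * X m w)%:C * - t l).
  by apply: cintegrable_sum => l; exact: cintegrable_realCM.
rewrite cexpectD // cexpect_realCM // cexpect_lin // mulr1 (bigD1 m) //= EXX eqxx mul1r.
rewrite big1 => [|l /negPf lm]; last by rewrite EXX lm rmorph0 mul0r.
by rewrite addr0 => /eqP; rewrite subr_eq0 => /eqP.
Qed.

Lemma eqL2_affine_coef0 f g c (b : 'I_d -> R) :
  (forall w, f w - g w = (c + \sum_(l < d) b l * X l w)%:C) ->
  eqL2 P f g -> c = 0 /\ forall l, b l = 0.
Proof.
have [ssL1 ssE] := Efin_affine_sqr c b.
move=> /funext fg; rewrite /eqL2 fg l2inner_realC // ssE => /(congr1 (@cre R)) /= /eqP.
rewrite paddr_eq0 ?sqr_ge0 ?sumr_ge0// => [/andP[/eqP c0]|l _]; last exact: sqr_ge0.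
rewrite psumr_eq0 => [/allP b0|l _]; last exact: sqr_ge0.
split=> [|l]; first by apply/eqP; rewrite -sqrf_eq0 c0.
by move: (b0 l (mem_index_enum l)); rewrite /= sqrf_eq0 => /eqP.
Qed.

Hypothesis XXX_L1 : forall a b c, (fun w => X a w * X b w * X c w) \in L1.

Lemma Uop_one a : Uop P X a 0 (fun=> 1) = fun=> 0.
Proof.
have Xa : mulX X a (fun=> 1) = fun w => (X a w)%:C by apply/funext => w; rewrite /mulX mulr1.
apply/funext => w; rewrite /Uop big_ord1 /= /azero_n (Gcomp0_cst P X 1) Xa Gcomp0 // EX.
by rewrite mulr0 add0r.
Qed.

Lemma Uop_X a b : Uop P X a 1 (fun w => (X b w)%:C) =
  fun w => ((a == b)%:R)%:C +
    2^-1 * (\sum_(m < d) Efin P (fun w => X a w * X b w * X m w) * X m w)%:C.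
Proof.
have G0b : Gcomp P X 0 (fun w => (X b w)%:C) = fun=> 0 by rewrite Gcomp0 // EX.
have G1b : Gcomp P X 1 (fun w => (X b w)%:C) = fun w => (X b w)%:C.
  rewrite Gcomp1 //; apply/funext => w; congr _%:C; rewrite (bigD1 b) //= EXX eqxx mul1r.
  by rewrite big1 ?addr0 // => l /negPf bl; rewrite EXX eq_sym bl mul0r.
have Xa0 : mulX X a (fun=> 0) = fun=> 0%:C by apply/funext => w; rewrite /mulX mulr0.
apply/funext => w; rewrite /Uop big_ord_recr big_ord1 /= /azero_n G0b G1b Xa0 Gcomp0_cst.
by rewrite mulX_realC Gcomp0 // Gcomp1 // EXX rmorph0 mulr0 !add0r.
Qed.

Lemma meixner_alpha_third_moment alpha beta : meixner_comm P X alpha beta ->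
  forall a b m, alpha a b m = 2^-1 * Efin P (fun w => X a w * X b w * X m w).
Proof.
move=> comm a b m; set t := fun m => Efin P (fun w => X a w * X b w * X m w).
have Xb : mulX X b (fun=> 1) = fun w => (X b w)%:C by apply/funext => w; rewrite /mulX mulr1.
have := comm a b 0 (fun=> 1) (polyRV_lt_cst X 0 1); rewrite Xb Uop_X Uop_one.
move/(eqL2_affine_coef0 _ _ ((a == b)%:R - beta a b) (fun l => 2^-1 * t l - alpha a b l)).
case=> [w|_ /(_ m) /eqP]; last by rewrite subr_eq0 => /eqP.
have -> : \sum_(l < d) (2^-1 * t l - alpha a b l) * X l w =
    2^-1 * \sum_(l < d) t l * X l w - \sum_(l < d) alpha a b l * X l w.
  by rewrite big_distrr -sumrB; apply: eq_bigr => l _ /=; ring.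
have -> : \sum_(k < d) (alpha a b k)%:C * (X k w)%:C * 1 =
    (\sum_(k < d) alpha a b k * X k w)%:C.
  by rewrite rmorph_sum; apply: eq_bigr => k _; rewrite mulr1 rmorphM.
have half : (2^-1 : R[i]) = (2^-1 : R)%:C by rewrite fmorphV rmorph_nat.
rewrite half !rmorphD !rmorphN rmorphM; ring.
Qed.

End orthonormal.

Lemma normrM_le_sqr {R : realDomainType} (a b : R) : `|a * b| <= a ^+ 2 + b ^+ 2.
Proof.
rewrite normrM -(real_normK (num_real a)) -(real_normK (num_real b)).
have := normr_ge0 a; have := normr_ge0 b; nra.
Qed.

Lemma normrM3_le {R : realDomainType} (a b c : R) :
  `|a * b * c| <= a ^+ 4 + b ^+ 4 + c ^+ 2.
Proof.
have abc := normrM_le_sqr (a * b) c.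
have ab := normrM_le_sqr (a ^+ 2) (b ^+ 2).
rewrite ger0_norm in ab; last by rewrite mulr_ge0 ?sqr_ge0.
have e1 : (a * b) ^+ 2 = a ^+ 2 * b ^+ 2 by ring.
have e2 : (a ^+ 2) ^+ 2 = a ^+ 4 by ring.
have e3 : (b ^+ 2) ^+ 2 = b ^+ 4 by ring.
rewrite e1 in abc; rewrite e2 e3 in ab; lra.
Qed.

Section moments.
Context {R : realType} {dm : measure_display} {T : measurableType dm}.
Context (P : probability T R) {d : nat} (X : 'I_d -> T -> R).
Local Notation L1 := (Lfun P 1).
Hypothesis mX : forall i, measurable_fun setT (X i).
Hypothesis momX : forall i n, integrable P setT (fun w => ((X i w) ^+ n)%:E).

Lemma L1_pow i n : (fun w => X i w ^+ n) \in L1.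
Proof. exact/Lfun1_integrable/momX. Qed.

Lemma L1_X k : X k \in L1.
Proof. by have := L1_pow k 1; under eq_fun do rewrite expr1. Qed.

Lemma L1_XX k l : (fun w => X k w * X l w) \in L1.
Proof.
apply: (L1_dominated P _ (fun w => X k w ^+ 2 + X l w ^+ 2)).
- exact: measurable_funM.
- exact: rpredD (L1_pow _ _) (L1_pow _ _).
- by move=> w; exact: normrM_le_sqr.
Qed.

Lemma L1_XXX a b c : (fun w => X a w * X b w * X c w) \in L1.
Proof.
apply: (L1_dominated P _ (fun w => X a w ^+ 4 + X b w ^+ 4 + X c w ^+ 2)).
- by apply: measurable_funM => //; exact: measurable_funM.
- by apply: rpredD; [apply: rpredD|]; exact: L1_pow.
- by move=> w; exact: normrM3_le.
Qed.

End moments.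

Lemma trip_perm_mul {S : comPzRingType} {d : nat} (f : 'I_d -> S) (i j k : 'I_d) (s : 'S_3) :
  f (trip i j k (s ord0)) * f (trip i j k (s (inord 1))) * f (trip i j k (s (inord 2))) =
  f i * f j * f k.
Proof.
have prod3 (g : 'I_3 -> S) : \prod_(p < 3) g p = g ord0 * g (inord 1) * g (inord 2).
  rewrite !big_ord_recl big_ord0 mulr1 mulrA.
  by congr (_ * g _ * g _); apply: val_inj; rewrite /= inordK.
have t1 : trip i j k (inord 1) = j by rewrite /trip (tnth_nth i) /= inordK.
have t2 : trip i j k (inord 2) = k by rewrite /trip (tnth_nth i) /= inordK.
have -> : f i * f j * f k = \prod_(p < 3) f (trip i j k p) by rewrite prod3 t1 t2.
by rewrite -(prod3 (fun p => f (trip i j k (s p)))) [RHS](reindex_inj (@perm_inj _ s)).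
Qed.

Theorem mainTheorem2 (R : realType) (dm : measure_display) (T : measurableType dm)
  (P : probability T R) (d : nat) (X : 'I_d -> T -> R)
  (alpha : 'I_d -> 'I_d -> 'I_d -> R) (beta : 'I_d -> 'I_d -> R) :
  (forall i, measurable_fun setT (X i)) ->
  (forall i (n : nat), integrable P setT (fun w => ((X i w) ^+ n)%:E)) ->
  meixner_comm P X alpha beta ->
  meixner_nondegenerate P X ->
  (forall k, expectation P (X k) = 0%E) ->
  (forall i j, expectation P (fun w => X i w * X j w) = ((i == j)%:R)%:E) ->
  forall i j k : 'I_d,
    [/\ alpha i j k = alpha j i k,
        alpha i j k = alpha i k j &
        forall s : 'S_3,
          alpha (trip i j k (s ord0)) (trip i j k (s (inord 1)))
                (trip i j k (s (inord 2))) = alpha i j k].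
Proof.
move=> mX momX comm _ EX EXX.
have EfinX k : Efin P (X k) = 0 by rewrite /Efin EX.
have EfinXX k l : Efin P (fun w => X k w * X l w) = (k == l)%:R by rewrite /Efin EXX.
have alphaE := meixner_alpha_third_moment P X (L1_X P X momX) (L1_XX P X mX momX)
  EfinX EfinXX (L1_XXX P X mX momX) _ _ comm.
move=> i j k; split=> [||s]; rewrite !alphaE; congr (_ * _); apply: Efin_ext => w /=.
- by ring.
- by ring.
- by rewrite (trip_perm_mul (X^~ w)).
Qed.
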